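(* Let $A=A^T\in\mathbb{R}^{n\times n}$, let $s$ be an integer with $1\leq s<d(A)$, and let $v_0\in\mathbb{R}^n$ with $\|v_0\|=1$ and $d(A,v_0)\geq s+1$. Consider the iteration $\widetilde v_{k+1}=P_s(A;v_k)v_k$, $v_{k+1}=\widetilde v_{k+1}/\|\widetilde v_{k+1}\|$, $k=0,1,2,\dots$, and let $\tau:=\lim_{k\to\infty}\|\widetilde v_k\|$ (this limit exists and is positive). Then every limit vector $v_*$ of the subsequence $\{v_{2k}\}$ satisfies $$(Q(A)-\tau^2 I)v_*=0,\qquad\text{where } Q(z):=P_s(z;w_* )\,P_s(z;v_* ),\quad w_*:=\frac{P_s(A;v_* )v_*}{\tau},$$ and in particular $s<d(A,v_* )\leq 2s$.
   Context: $d(A)$ is the degree of the minimal polynomial of $A$; $d(A,v)$ is the grade of $v$ w.r.t. $A$ (degree of the monic polynomial $p$ of smallest degree with $p(A)v=0$); $\mathcal{K}_k(A,v)=\mathrm{span}\{v,Av,\dots,A^{k-1}v\}$; $\mathcal{M}_s$ is the set of real monic polynomials of degree $s$; $\|\cdot\|$ is the Euclidean norm. For $v$ with $d(A,v)\geq s$, $P_s(\cdot\,;v)\in\mathcal{M}_s$ denotes the unique monic polynomial of degree $s$ such that $P_s(A;v)v\perp\mathcal{K}_s(A,v)$. (Under the hypotheses all $\widetilde v_k$ are nonzero, the sequence $\|\widetilde v_k\|$ is nondecreasing and bounded, and every limit vector $v_*$ has $d(A,v_* )\geq s+1$, $\|P_s(A;v_* )v_*\|=\tau$ and $d(A,w_*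 )\geq s$, so $Q$ is well defined.) *)

From HB Require Import structures.
From mathcomp Require Import all_boot all_order all_algebra.
From mathcomp Require Import all_classical all_reals all_analysis.
Set Implicit Arguments. Unset Strict Implicit. Unset Printing Implicit Defensive.
Import Order.TTheory GRing.Theory Num.Theory.
Local Open Scope ring_scope.

Section Defs.
Variables (R : realType) (n' : nat).
Local Notation n := n'.+1.

Definition dotv (u v : 'cV[R]_n) : R := \sum_i u i 0 * v i 0.
Definition enorm (v : 'cV[R]_n) : R := Num.sqrt (dotv v v).

Definition pAv (A : 'M[R]_n) (p : {poly R}) (v : 'cV[R]_n) : 'cV[R]_n :=
  horner_mx A p *m v.

Definition dmin (A : 'M[R]_n) : nat := (size (mxminpoly A)).-1.

Definition annih_deg (A : 'M[R]_n) (v : 'cV[R]_n) (k : nat) : bool :=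
  `[< exists p : {poly R}, [/\ p \is monic, size p = k.+1 & pAv A p v = 0] >].

Lemma annih_deg_ex (A : 'M[R]_n) (v : 'cV[R]_n) : exists k, annih_deg A v k.
Proof.
exists (size (mxminpoly A)).-1; apply/asboolP; exists (mxminpoly A); split.
- exact: mxminpoly_monic.
- by rewrite size_mxminpoly.
- by rewrite /pAv mx_root_minpoly mul0mx.
Qed.

Definition grade (A : 'M[R]_n) (v : 'cV[R]_n) : nat := ex_minn (annih_deg_ex A v).

(* p = P_s(. ; v): monic of degree s with p(A) v orthogonal to K_s(A,v) *)
Definition is_Ps (A : 'M[R]_n) (s : nat) (v : 'cV[R]_n) (p : {poly R}) : Prop :=
  [/\ p \is monic, size p = s.+1 &
      forall j : nat, (j < s)%N -> dotv (A ^+ j *m v) (pAv A p v) = 0].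

End Defs.

(* P_s(A;v)v is the component of A^s v orthogonal to K_s(A,v), so ||P_s(A;v)v|| is the least
   value of ||q(A)v|| over monic q of degree s.  For symmetric A one step of the iteration
   cannot decrease this residual norm (move q(A) across the inner product and use
   Cauchy-Schwarz), and it is bounded by the norm of A^s, so ||vt_k|| increases to some
   tau > 0.  Along a subsequence v_(2k) -> vs, minimality gives ||q(A)vs|| >= tau for every
   monic q of degree s, hence d(A,vs) > s; the Krylov vectors of vs are then independent,
   which keeps the coefficients of P_s(.;v_(2k)) bounded, and so P_s(A;v_(2k))v_(2k) tends to
   P_s(A;vs)vs, a vector of norm tau.  Hence v_(2k+1) -> ws, and likewise
   ||P_s(A;ws)ws|| = tau.  Then y = Q(A)vs satisfies <y,vs> = tau^2 = ||y|| with ||vs|| = 1,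
   which forces y = tau^2 vs, and Q - tau^2 is a monic annihilator of vs of degree 2s. *)

From HB Require Import structures.
From mathcomp Require Import all_boot all_order all_algebra.
From mathcomp Require Import all_classical all_reals all_analysis.
From mathcomp Require Import ring lra.
Import Order.TTheory GRing.Theory Num.Theory.
Import numFieldNormedType.Exports.
Local Open Scope classical_set_scope.
Local Open Scope ring_scope.
Set Implicit Arguments. Unset Strict Implicit.

Section Euclidean.
Variables (R : realType) (n : nat).
Implicit Types (u v w : 'cV[R]_n.+1) (a : R).

Lemma dotvE u v : dotv u v = (u^T *m v) 0 0.
Proof. by rewrite /dotv mxE; apply: eq_bigr => i _; rewrite mxE. Qed.

Lemma dotvC u v : dotv u v = dotv v u.
Proof. by rewrite /dotv; apply: eq_bigr => i _; rewrite mulrC. Qed.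

Lemma dotvDl u w v : dotv (u + w) v = dotv u v + dotv w v.
Proof. by rewrite !dotvE linearD /= mulmxDl mxE. Qed.

Lemma dotvZl a u v : dotv (a *: u) v = a * dotv u v.
Proof. by rewrite !dotvE linearZ /= -scalemxAl mxE. Qed.

Lemma dotvBl u w v : dotv (u - w) v = dotv u v - dotv w v.
Proof. by rewrite dotvDl -scaleN1r dotvZl mulN1r. Qed.

Lemma dotvDr u w v : dotv v (u + w) = dotv v u + dotv v w.
Proof. by rewrite dotvC dotvDl !(dotvC v). Qed.

Lemma dotvZr a u v : dotv v (a *: u) = a * dotv v u.
Proof. by rewrite dotvC dotvZl dotvC. Qed.

Lemma dotvBr u w v : dotv v (u - w) = dotv v u - dotv v w.
Proof. by rewrite dotvC dotvBl !(dotvC v). Qed.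

Lemma dotv0r v : dotv v 0 = 0.
Proof. by rewrite /dotv big1 // => i _; rewrite mxE mulr0. Qed.

Lemma dotv_suml I (r : seq I) (P : pred I) (F : I -> 'cV[R]_n.+1) v :
  dotv (\sum_(i <- r | P i) F i) v = \sum_(i <- r | P i) dotv (F i) v.
Proof.
by apply: (big_morph (fun x => dotv x v)) => [x y|]; rewrite ?dotvDl // dotvC dotv0r.
Qed.

Lemma dotvv_ge0 v : 0 <= dotv v v.
Proof. by rewrite sumr_ge0 // => i _; rewrite -expr2 sqr_ge0. Qed.

Lemma dotvv_eq0 v : (dotv v v == 0) = (v == 0).
Proof.
apply/idP/eqP => [|->]; last by rewrite dotv0r.
rewrite psumr_eq0 => [/allP v0|i _]; last by rewrite -expr2 sqr_ge0.
apply/matrixP => i j; rewrite (ord1 j) mxE.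
by have /= := v0 i (mem_index_enum _); rewrite mulf_eq0 orbb => /eqP.
Qed.

Lemma enorm_ge0 v : 0 <= enorm v.
Proof. exact: sqrtr_ge0. Qed.

Lemma enorm_sqr v : enorm v ^+ 2 = dotv v v.
Proof. by rewrite sqr_sqrtr // dotvv_ge0. Qed.

Lemma enorm_eq0 v : (enorm v == 0) = (v == 0).
Proof. by rewrite -dotvv_eq0 -enorm_sqr sqrf_eq0. Qed.

Lemma enorm0 : enorm (0 : 'cV[R]_n.+1) = 0.
Proof. by apply/eqP; rewrite enorm_eq0. Qed.

Lemma enormZ a v : enorm (a *: v) = `|a| * enorm v.
Proof. by rewrite /enorm dotvZl dotvZr mulrA sqrtrM ?sqr_ge0 // -expr2 sqrtr_sqr. Qed.

Lemma enormN v : enorm (- v) = enorm v.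
Proof. by rewrite -scaleN1r enormZ normrN normr1 mul1r. Qed.

Lemma ler_norm_dotv u v : `|dotv u v| <= enorm u * enorm v.
Proof.
rewrite -ler_sqr ?nnegrE ?mulr_ge0 ?enorm_ge0 // exprMn !enorm_sqr real_normK ?num_real //.
have [->|v_neq0] := eqVneq v 0; first by rewrite !dotv0r expr2 !mulr0.
have v_gt0 : 0 < dotv v v by rewrite lt_def dotvv_eq0 v_neq0 dotvv_ge0.
set c := dotv u v / dotv v v.
have := dotvv_ge0 (u - c *: v).
rewrite dotvBl !dotvBr !dotvZl !dotvZr (dotvC v u) -subr_ge0 => h.
suff -> : dotv u u * dotv v v - dotv u v ^+ 2 =
    dotv v v * (dotv u u - c * dotv u v - (c * dotv u v - c * (c * dotv v v))).
  by rewrite mulr_ge0 // ltW.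
by rewrite /c; field; rewrite gt_eqF.
Qed.

Lemma ler_enormD u v : enorm (u + v) <= enorm u + enorm v.
Proof.
rewrite -ler_sqr ?nnegrE ?addr_ge0 ?enorm_ge0 // enorm_sqr dotvDl !dotvDr.
rewrite sqrrD !enorm_sqr (dotvC v u).
have := ler_norm_dotv u v; rewrite ler_norml => /andP[_]; lra.
Qed.

Lemma ler_enormB u v : enorm (u - v) <= enorm u + enorm v.
Proof. by rewrite -(enormN v) ler_enormD. Qed.

Lemma ler_enorm_sub u v : enorm u <= enorm v + enorm (u - v).
Proof. by rewrite -{1}(subrKC v u) ler_enormD. Qed.

Lemma ler_dist_enorm u v : `|enorm u - enorm v| <= enorm (u - v).
Proof.
have := ler_enorm_sub u v; have := ler_enorm_sub v u.
rewrite -(enormN (v - u)) opprB ler_norml; lra.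
Qed.

Lemma ler_enorm_sum (I : finType) (F : I -> 'cV[R]_n.+1) :
  enorm (\sum_i F i) <= \sum_i enorm (F i).
Proof.
elim/big_rec2: _ => [|i y x _ h]; first by rewrite enorm0.
by apply: le_trans (ler_enormD _ _) _; rewrite lerD2l.
Qed.

Lemma ler_coord_enorm u i : `|u i 0| <= enorm u.
Proof.
rewrite -sqrtr_sqr ler_sqrt ?dotvv_ge0 // /dotv (bigD1 i) //= -expr2 lerDl.
by rewrite sumr_ge0 // => j _; rewrite -expr2 sqr_ge0.
Qed.

Lemma ler_enorm_l1 u : enorm u <= \sum_i `|u i 0|.
Proof.
rewrite -ler_sqr ?nnegrE ?enorm_ge0 ?sumr_ge0 // enorm_sqr expr2 big_distrl /=.
apply: ler_sum => i _; apply: le_trans (ler_norm _) _; rewrite normrM ler_wpM2l //.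
by rewrite (bigD1 i) //= lerDl sumr_ge0.
Qed.

End Euclidean.

Definition mx_l1 (R : realType) m n (M : 'M[R]_(m, n)) : R := \sum_i \sum_j `|M i j|.

Definition coef_l1 (R : realType) (r : {poly R}) s : R := \sum_(i < s) `|r`_i|.

Definition krylov_l1 (R : realType) n (A : 'M[R]_n.+1) s : R := \sum_(i < s) mx_l1 (A ^+ i).

Section KrylovAlgebra.
Variables (R : realType) (n : nat) (A : 'M[R]_n.+1).
Implicit Types (u v x : 'cV[R]_n.+1) (p q r : {poly R}).

Lemma mx_l1_ge0 m k (M : 'M[R]_(m, k)) : 0 <= mx_l1 M.
Proof. by rewrite sumr_ge0 // => i _; rewrite sumr_ge0. Qed.

Lemma ler_enorm_mulmx (M : 'M[R]_n.+1) x : enorm (M *m x) <= mx_l1 M * enorm x.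
Proof.
apply: le_trans (ler_enorm_l1 _) _; rewrite big_distrl /=; apply: ler_sum => i _.
rewrite mxE big_distrl /=; apply: le_trans (ler_norm_sum _ _ _) _; apply: ler_sum => j _.
by rewrite normrM ler_wpM2l ?normr_ge0 // ler_coord_enorm.
Qed.

Lemma pAvDl p q v : pAv A (p + q) v = pAv A p v + pAv A q v.
Proof. by rewrite /pAv rmorphD mulmxDl. Qed.

Lemma pAvBl p q v : pAv A (p - q) v = pAv A p v - pAv A q v.
Proof. by rewrite /pAv rmorphB mulmxBl. Qed.

Lemma pAvZl c p v : pAv A (c *: p) v = c *: pAv A p v.
Proof. by rewrite /pAv linearZ /= -scalemxAl. Qed.

Lemma pAvMl p q v : pAv A (p * q) v = pAv A p (pAv A q v).
Proof. by rewrite /pAv rmorphM mulmxA. Qed.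

Lemma pAvC c v : pAv A c%:P v = c *: v.
Proof. by rewrite /pAv horner_mx_C mul_scalar_mx. Qed.

Lemma pAvXn k v : pAv A 'X^k v = A ^+ k *m v.
Proof. by rewrite /pAv rmorphXn /= horner_mx_X. Qed.

Lemma pAvBr p u v : pAv A p (u - v) = pAv A p u - pAv A p v.
Proof. by rewrite /pAv mulmxBr. Qed.

Lemma pAvZr p c v : pAv A p (c *: v) = c *: pAv A p v.
Proof. by rewrite /pAv scalemxAr. Qed.

Lemma pAv_sum p d v : (size p <= d)%N -> pAv A p v = \sum_(i < d) p`_i *: (A ^+ i *m v).
Proof.
move=> sp; have {1}-> : p = \poly_(i < d) p`_i.
  apply/polyP => i; rewrite coef_poly; case: ltnP => // di.
  by apply/leq_sizeP: di; apply: leq_trans sp _.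
rewrite poly_def /pAv linear_sum mulmx_suml; apply: eq_bigr => i _.
by rewrite linearZ /= rmorphXn /= horner_mx_X scalemxAl.
Qed.

Lemma ler_enorm_pAv p v : enorm (pAv A p v) <= mx_l1 (horner_mx A p) * enorm v.
Proof. exact: ler_enorm_mulmx. Qed.

Lemma krylov_l1_ge0 s : 0 <= krylov_l1 A s.
Proof. by rewrite sumr_ge0 // => i _; apply: mx_l1_ge0. Qed.

Lemma ler_enorm_pAv_coef p s v : (size p <= s)%N ->
  enorm (pAv A p v) <= coef_l1 p s * krylov_l1 A s * enorm v.
Proof.
move=> sp; rewrite (pAv_sum _ sp); apply: le_trans (ler_enorm_sum _) _.
rewrite /coef_l1 !big_distrl /=; apply: ler_sum => i _; rewrite enormZ -mulrA ler_wpM2l //.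
apply: le_trans (ler_enorm_mulmx _ _) _; rewrite ler_wpM2r ?enorm_ge0 //.
by rewrite /krylov_l1 (bigD1 i) //= lerDl sumr_ge0 // => j _; apply: mx_l1_ge0.
Qed.

Lemma horner_mx_tr p : A^T = A -> (horner_mx A p)^T = horner_mx A p.
Proof.
move=> symA; elim/poly_ind: p => [|p c IHp]; first by rewrite rmorph0 trmx0.
rewrite rmorphD rmorphM /= horner_mx_X horner_mx_C linearD /= tr_scalar_mx.
by rewrite trmx_mul IHp symA (comm_mx_horner p (erefl : comm_mx A A)).
Qed.

Lemma dotv_pAv p u v : A^T = A -> dotv (pAv A p u) v = dotv u (pAv A p v).
Proof. by move=> symA; rewrite !dotvE /pAv trmx_mul horner_mx_tr // mulmxA. Qed.

End KrylovAlgebra.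

Lemma size_monicB_le (R : nzRingType) (p q : {poly R}) s :
  p \is monic -> q \is monic -> size p = s.+1 -> size q = s.+1 -> (size (q - p)%R <= s)%N.
Proof.
move=> mp mq sp sq; apply/leq_sizeP => j; rewrite leq_eqVlt => /predU1P[<-|sj].
  by move/monicP: mp; move/monicP: mq; rewrite !lead_coefE sp sq coefB => -> ->; rewrite subrr.
by rewrite coefB !nth_default ?subrr // ?sp ?sq.
Qed.

Section MinimizingPolynomial.
Variables (R : realType) (n : nat) (A : 'M[R]_n.+1) (s : nat) (v : 'cV[R]_n.+1) (p : {poly R}).
Hypothesis Pv : is_Ps A s v p.
Implicit Types q r : {poly R}.

Lemma Ps_orth r : (size r <= s)%N -> dotv (pAv A r v) (pAv A p v) = 0.
Proof.
case: Pv => _ _ orth sr; rewrite (pAv_sum _ _ sr) dotv_suml big1 // => i _.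
by rewrite dotvZl orth ?mulr0.
Qed.

Lemma Ps_dot_monic q : q \is monic -> size q = s.+1 ->
  dotv (pAv A q v) (pAv A p v) = enorm (pAv A p v) ^+ 2.
Proof.
case: Pv => mp sp _ mq sq; rewrite -[q](subrKC p) pAvDl dotvDl enorm_sqr.
by rewrite (Ps_orth (size_monicB_le mp mq sp sq)) addr0.
Qed.

Lemma Ps_pythagoras q : q \is monic -> size q = s.+1 ->
  enorm (pAv A q v) ^+ 2 = enorm (pAv A p v) ^+ 2 + enorm (pAv A (q - p) v) ^+ 2.
Proof.
case: Pv => mp sp _ mq sq; have orth := Ps_orth (size_monicB_le mp mq sp sq).
move: (q - p) orth (subrKC p q) => d orth <-.
by rewrite !enorm_sqr pAvDl dotvDl !dotvDr orth (dotvC (pAv A p v)) orth addr0 add0r.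
Qed.

Lemma Ps_min q : q \is monic -> size q = s.+1 -> enorm (pAv A p v) <= enorm (pAv A q v).
Proof.
move=> mq sq; have [->|p_neq0] := eqVneq (enorm (pAv A p v)) 0; first exact: enorm_ge0.
have p_gt0 : 0 < enorm (pAv A p v) by rewrite lt_def p_neq0 enorm_ge0.
rewrite -(ler_pM2r p_gt0) -expr2 -(Ps_dot_monic mq sq).
exact: le_trans (ler_norm _) (ler_norm_dotv _ _).
Qed.

End MinimizingPolynomial.

Section Grade.
Variables (R : realType) (n : nat) (A : 'M[R]_n.+1) (x : 'cV[R]_n.+1).

Lemma grade_le (q : {poly R}) k :
  q \is monic -> size q = k.+1 -> pAv A q x = 0 -> (grade A x <= k)%N.
Proof.
move=> mq sq qx; rewrite /grade; case: ex_minnP => m _; apply.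
by apply/asboolP; exists q.
Qed.

Lemma grade_annihilator :
  exists2 q : {poly R}, q \is monic & size q = (grade A x).+1 /\ pAv A q x = 0.
Proof. by rewrite /grade; case: ex_minnP => m /asboolP[q [mq sq qx]] _; exists q. Qed.

Lemma pAv_neq0 (r : {poly R}) : r != 0 -> (size r <= grade A x)%N -> pAv A r x != 0.
Proof.
move=> r_neq0 sr; apply/eqP => rx.
have mr : (lead_coef r)^-1 *: r \is monic.
  by rewrite monicE lead_coefZ mulVf ?lead_coef_eq0.
have sr_gt0 : (0 < size r)%N by rewrite size_poly_gt0.
have smr : size ((lead_coef r)^-1 *: r) = (size r).-1.+1.
  by rewrite size_scale ?invr_eq0 ?lead_coef_eq0 // prednK.
have := grade_le mr smr.
rewrite pAvZl rx scaler0 => /(_ erefl) gr.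
by move: (leq_trans sr gr); rewrite leqNgt ltn_predL sr_gt0.
Qed.

Lemma grade_gt s :
  (forall q : {poly R}, q \is monic -> size q = s.+1 -> pAv A q x != 0) -> (s < grade A x)%N.
Proof.
move=> q_neq0; rewrite ltnNge; apply/negP => gs.
have [q mq [sq qx]] := grade_annihilator.
have mXq : 'X^(s - grade A x) * q \is monic by rewrite monicMl ?monicXn.
suff sXq : size ('X^(s - grade A x) * q) = s.+1.
  by have := q_neq0 _ mXq sXq; rewrite pAvMl qx /pAv mulmx0 eqxx.
by rewrite size_Mmonic ?monic_neq0 ?monicXn // size_polyXn sq addSn addnS subnK.
Qed.

End Grade.

Lemma krylov_coef_bound (R : realType) n (A : 'M[R]_n.+1) s x : (s <= grade A x)%N ->
  exists2 C, 0 <= C &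
    forall r : {poly R}, (size r <= s)%N -> coef_l1 r s <= C * enorm (pAv A r x).
Proof.
move=> s_le_grade.
pose K : 'M[R]_(s, n.+1) := \matrix_(i, k) (A ^+ i *m x) k 0.
have KE (r : {poly R}) : (size r <= s)%N -> poly_rV r *m K = (pAv A r x)^T.
  move=> sr; apply/rowP => k; rewrite (pAv_sum _ _ sr) !mxE summxE.
  by apply: eq_bigr => i _; rewrite !mxE.
have /row_freeP[L KL] : row_free K.
  apply: inj_row_free => c cK; have sc : (size (rVpoly c) <= s)%N by exact: size_poly.
  have [c0|c_neq0] := eqVneq (rVpoly c) 0; first by rewrite -[c]rVpolyK c0 linear0.
  have := pAv_neq0 c_neq0 (leq_trans sc s_le_grade).
  by rewrite -trmx_eq0 -KE // rVpolyK cK eqxx.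
exists (\sum_i \sum_k `|L k i|); first by rewrite sumr_ge0 // => i _; rewrite sumr_ge0.
move=> r sr; have rL : poly_rV r = (pAv A r x)^T *m L by rewrite -KE // -mulmxA KL mulmx1.
rewrite /coef_l1 big_distrl /=; apply: ler_sum => i _.
have -> : r`_i = ((pAv A r x)^T *m L) 0 i by rewrite -rL mxE.
rewrite mxE big_distrl /=; apply: le_trans (ler_norm_sum _ _ _) _; apply: ler_sum => k _.
by rewrite mxE normrM mulrC ler_wpM2l ?normr_ge0 // ler_coord_enorm.
Qed.

Lemma cvgn_comp_ge {T : topologicalType} (u : nat -> T) (f : nat -> nat) (l : T) :
  (forall j, (j <= f j)%N) -> u @ \oo --> l -> (u \o f) @ \oo --> l.
Proof.
move=> f_ge; apply: cvg_comp => P [N _ NP]; exists N => // j /= Nj.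
exact/NP/(leq_trans Nj (f_ge j)).
Qed.

Lemma squeeze_cvg0 (R : realType) (a b : nat -> R) :
  (\forall j \near \oo, 0 <= a j <= b j) -> b @ \oo --> 0 -> a @ \oo --> 0.
Proof. by move=> ab; apply: squeeze_cvgr ab _ _; apply: cvg_cst. Qed.

Lemma cvg0_scale (R : realType) (e : nat -> R) c : e @ \oo --> 0 -> (fun j => c * e j) @ \oo --> 0.
Proof. by move=> e0; rewrite -(mulr0 c); apply: cvgM => //; apply: cvg_cst. Qed.

Definition enorm_cvg (R : realType) n (u : nat -> 'cV[R]_n.+1) (l : 'cV[R]_n.+1) : Prop :=
  (fun k => enorm (u k - l)) @ \oo --> (0 : R).

Section EnormCvg.
Variables (R : realType) (n : nat).
Implicit Types (u : nat -> 'cV[R]_n.+1) (l : 'cV[R]_n.+1).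

Lemma enorm_cvg_enorm u l : enorm_cvg u l -> (fun k => enorm (u k)) @ \oo --> enorm l.
Proof.
move=> ul; apply/cvgrPdist_le => e e_gt0; near=> k.
rewrite distrC; apply: le_trans (ler_dist_enorm _ _) _.
rewrite -[leLHS]ger0_norm ?enorm_ge0 //; near: k; exact: cvgr0_norm_le _ ul _ e_gt0.
Unshelve. all: by end_near. Qed.

Lemma enorm_cvg_pAv (A : 'M[R]_n.+1) p u l :
  enorm_cvg u l -> enorm_cvg (fun k => pAv A p (u k)) (pAv A p l).
Proof.
move=> ul; apply: squeeze_cvg0 (cvg0_scale (mx_l1 (horner_mx A p)) ul).
by near=> k; rewrite enorm_ge0 -pAvBr ler_enorm_pAv.
Unshelve. all: by end_near. Qed.

Lemma enorm_cvg_normalize u l : l != 0 -> enorm_cvg u l ->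
  enorm_cvg (fun k => (enorm (u k))^-1 *: u k) ((enorm l)^-1 *: l).
Proof.
move=> l_neq0 ul; have la_neq0 : enorm l != 0 by rewrite enorm_eq0.
have inv_cvg : (fun k => (enorm (u k))^-1) @ \oo --> (enorm l)^-1.
  exact: cvgV la_neq0 (enorm_cvg_enorm ul).
pose b k := `|(enorm (u k))^-1| * enorm (u k - l) +
  `|(enorm (u k))^-1 - (enorm l)^-1| * enorm l.
have : b @ \oo --> `|(enorm l)^-1| * 0 + `|(enorm l)^-1 - (enorm l)^-1| * enorm l.
  apply: cvgD; apply: cvgM; [exact: cvg_norm inv_cvg | exact: ul | | exact: cvg_cst].
  by apply: cvg_norm; apply: cvgB inv_cvg (cvg_cst _).
rewrite mulr0 subrr normr0 mul0r addr0 => b0; apply: squeeze_cvg0 b0; near=> k.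
rewrite enorm_ge0 /b /=.
have -> : (enorm (u k))^-1 *: u k - (enorm l)^-1 *: l =
    (enorm (u k))^-1 *: (u k - l) + ((enorm (u k))^-1 - (enorm l)^-1) *: l.
  by rewrite scalerBr scalerBl addrA subrK.
by apply: le_trans (ler_enormD _ _) _; rewrite !enormZ.
Unshelve. all: by end_near. Qed.

End EnormCvg.

Section ResidualContinuity.
Variables (R : realType) (n : nat) (A : 'M[R]_n.+1) (s : nat).
Variables (u : nat -> 'cV[R]_n.+1) (x : 'cV[R]_n.+1) (p : nat -> {poly R}) (tau : R).
Hypotheses (tau_gt0 : 0 < tau) (Pu : forall j, is_Ps A s (u j) (p j)).
Hypotheses (u_unit : forall j, enorm (u j) = 1) (u_cvg : enorm_cvg u x).
Hypothesis res_cvg : (fun j => enorm (pAv A (p j) (u j))) @ \oo --> tau.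

Lemma residual_limit_le q : q \is monic -> size q = s.+1 -> tau <= enorm (pAv A q x).
Proof.
move=> mq sq; apply: ler_cvg_to res_cvg (enorm_cvg_enorm (enorm_cvg_pAv A q u_cvg)) _.
by near=> j; apply: Ps_min.
Unshelve. all: by end_near. Qed.

Lemma grade_limit_gt : (s < grade A x)%N.
Proof.
apply: grade_gt => q mq sq; rewrite -enorm_eq0 gt_eqF //.
exact: lt_le_trans tau_gt0 (residual_limit_le mq sq).
Qed.

Variable px : {poly R}.
Hypothesis Px : is_Ps A s x px.

(* The Krylov vectors of [x] are independent, so the coefficients of [px - p j] are controlled
   by ||(px - p j)(A) x||; this bound feeds back into itself and closes once [u j] is close
   to [x]. *)
Lemma coef_residual_bounded : exists K, \forall j \near \oo, coef_l1 (px - p j) s <= K.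
Proof.
have [C C_ge0 coefC] := krylov_coef_bound (ltnW grade_limit_gt).
pose G := krylov_l1 A s; pose B := mx_l1 (horner_mx A px).
have [mpx spx _] := Px; have G_ge0 : 0 <= G := krylov_l1_ge0 A s.
exists (4 * C * B); near=> j.
have small : C * G * enorm (u j - x) <= 2^-1.
  rewrite -[leLHS]ger0_norm ?mulr_ge0 ?enorm_ge0 //; near: j.
  by apply: (cvgr0_norm_le _ (cvg0_scale (C * G) u_cvg)); rewrite invr_gt0.
have [mpj spj _] := Pu j; have sd := size_monicB_le mpj mpx spj spx.
set S := coef_l1 _ s; set e := enorm _ in small.
have S_ge0 : 0 <= S by rewrite sumr_ge0.
have dBu : enorm (pAv A (px - p j) (u j)) <= 2 * B.
  rewrite pAvBl; apply: le_trans (ler_enormB _ _) _.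
  have := ler_enorm_pAv A px (u j); have := Ps_min (Pu j) mpx spx.
  rewrite u_unit mulr1 -/B; lra.
have dx : enorm (pAv A (px - p j) x) <= 2 * B + S * G * e.
  apply: le_trans (ler_enorm_sub _ (pAv A (px - p j) (u j))) _.
  rewrite -pAvBr; apply: lerD dBu _; apply: le_trans (ler_enorm_pAv_coef _ _ sd) _.
  by rewrite -enormN opprB.
have := coefC _ sd; rewrite -/S => SC.
have : S <= C * (2 * B + S * G * e) by apply: le_trans SC _; rewrite ler_wpM2l.
have : C * (S * G * e) <= S / 2.
  by rewrite (_ : C * _ = S * (C * G * e)) ?ler_wpM2l //; ring.
lra.
Unshelve. all: by end_near. Qed.

Lemma residual_limit_norm : enorm (pAv A px x) = tau.
Proof.
have [mpx spx _] := Px; apply/le_anti; rewrite residual_limit_le // andbT.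
have [K SK] := coef_residual_bounded.
pose G := krylov_l1 A s; pose B := mx_l1 (horner_mx A px).
have ub_cvg : (fun j => enorm (pAv A (p j) (u j)) + (B + K * G) * enorm (u j - x))
    @ \oo --> tau.
  by rewrite -[tau]addr0; apply: cvgD res_cvg (cvg0_scale _ u_cvg).
apply: ler_cvg_to (cvg_cst _) ub_cvg _; near=> j.
have [mpj spj _] := Pu j; have sd := size_monicB_le mpj mpx spj spx.
apply: le_trans (Ps_min Px mpj spj) _.
apply: le_trans (ler_enorm_sub _ (pAv A (p j) (u j))) _; rewrite lerD2l -pAvBr.
rewrite -[p j](subKr px) pAvBl -enormN opprB; apply: le_trans (ler_enormB _ _) _.
have := ler_enorm_pAv A px (x - u j); have := ler_enorm_pAv_coef A (x - u j) sd.
have : coef_l1 (px - p j) s <= K by near: j.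
rewrite -/G -/B -(enormN (x - u j)) opprB => SKj dB pB.
have Ge_ge0 : 0 <= G * enorm (u j - x) by rewrite mulr_ge0 ?enorm_ge0 ?krylov_l1_ge0.
have : coef_l1 (px - p j) s * (G * enorm (u j - x)) <= K * (G * enorm (u j - x)).
  by rewrite ler_wpM2r.
rewrite !mulrA; lra.
Unshelve. all: by end_near. Qed.

Lemma residual_limit : enorm_cvg (fun j => pAv A (p j) (u j)) (pAv A px x).
Proof.
have [mpx spx _] := Px.
pose D j := enorm (pAv A (px - p j) (u j)).
have D2_cvg : (fun j => D j ^+ 2) @ \oo --> 0.
  have px_cvg := enorm_cvg_enorm (enorm_cvg_pAv A px u_cvg).
  rewrite residual_limit_norm in px_cvg.
  pose a j := enorm (pAv A px (u j)); pose b j := enorm (pAv A (p j) (u j)).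
  have ab_cvg : (fun j => a j * a j - b j * b j) @ \oo --> tau * tau - tau * tau.
    exact: cvgB (cvgM px_cvg px_cvg) (cvgM res_cvg res_cvg).
  rewrite subrr in ab_cvg; rewrite (eq_cvg _ _ (g := fun j => a j * a j - b j * b j)) //.
  by move=> j; rewrite /a /b -!expr2 (Ps_pythagoras (Pu j) mpx spx) addrC addKr.
have D_cvg : D @ \oo --> 0.
  have := cvg_comp _ _ D2_cvg (@sqrt_continuous R 0); rewrite sqrtr0.
  apply: squeeze_cvg0; near=> j.
  by rewrite /= sqrtr_sqr ger0_norm /D ?enorm_ge0 ?lexx.
have b_cvg : (fun j => mx_l1 (horner_mx A px) * enorm (u j - x) + D j) @ \oo --> 0 + 0.
  exact: cvgD (cvg0_scale _ u_cvg) D_cvg.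
rewrite addr0 in b_cvg; apply: squeeze_cvg0 b_cvg; near=> j; rewrite enorm_ge0 /=.
rewrite -[p j](subKr px) pAvBl addrAC -pAvBr.
by apply: le_trans (ler_enormB _ _) _; rewrite lerD2r ler_enorm_pAv.
Unshelve. all: by end_near. Qed.

End ResidualContinuity.

Lemma Ps_residual_step (R : realType) n (A : 'M[R]_n.+1) s v (p q : {poly R}) :
  A^T = A -> is_Ps A s v p -> enorm v = 1 -> q \is monic -> size q = s.+1 ->
  enorm (pAv A p v) <= enorm (pAv A q ((enorm (pAv A p v))^-1 *: pAv A p v)).
Proof.
move=> symA Pv v_unit mq sq; set t := enorm (pAv A p v).
have [->|t_neq0] := eqVneq t 0; first exact: enorm_ge0.
have t_gt0 : 0 < t by rewrite lt_def t_neq0 enorm_ge0.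
rewrite -(ler_pM2l t_gt0) -expr2 -(Ps_dot_monic Pv mq sq) dotv_pAv //.
rewrite -{1}[pAv A p v](scalerKV t_neq0) pAvZr dotvZr ler_pM2l //.
by apply: le_trans (ler_norm _) _; rewrite -[X in _ <= X]mul1r -v_unit ler_norm_dotv.
Qed.

Lemma unit_limit (R : realType) n (u : nat -> 'cV[R]_n.+1) x :
  (forall j, enorm (u j) = 1) -> enorm_cvg u x -> enorm x = 1.
Proof.
move=> u_unit ux; have ex_cvg := enorm_cvg_enorm ux.
apply/le_anti/andP; split.
- by apply: ler_cvg_to ex_cvg (cvg_cst (1 : R)) _; near=> j; rewrite u_unit.
- by apply: ler_cvg_to (cvg_cst (1 : R)) ex_cvg _; near=> j; rewrite u_unit.
Unshelve. all: by end_near. Qed.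

Section Iteration.
Variables (R : realType) (n : nat) (A : 'M[R]_n.+1) (s : nat).
Variables (vt v : nat -> 'cV[R]_n.+1) (P : nat -> {poly R}).
Hypotheses (symA : A^T = A) (v0_unit : enorm (v 0) = 1) (v0_grade : (s < grade A (v 0))%N).
Hypotheses (Pv : forall k, is_Ps A s (v k) (P k)) (vtE : forall k, vt k.+1 = pAv A (P k) (v k)).
Hypothesis vE : forall k, v k.+1 = (enorm (vt k.+1))^-1 *: vt k.+1.

Lemma iterate_residual_le k : enorm (v k) = 1 -> enorm (vt k.+1) <= enorm (vt k.+2).
Proof.
move=> vk_unit; have [mP sP _] := Pv k.+1.
by rewrite vtE (vtE k.+1) vE vtE (Ps_residual_step symA (Pv k)).
Qed.

Lemma iterate_unit_pos k : enorm (v k) = 1 /\ 0 < enorm (vt k.+1).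
Proof.
elim: k => [|k [vk_unit tk_gt0]].
  split=> //; rewrite lt_def enorm_ge0 enorm_eq0 andbT vtE.
  by have [mP sP _] := Pv 0; rewrite pAv_neq0 ?monic_neq0 ?sP.
split; last exact: lt_le_trans tk_gt0 (iterate_residual_le vk_unit).
by rewrite vE enormZ ger0_norm ?invr_ge0 ?enorm_ge0 // mulVf ?gt_eqF.
Qed.

Lemma iterate_residual_cvg : exists2 tau : R, 0 < tau & (fun k => enorm (vt k)) @ \oo --> tau.
Proof.
pose t k := enorm (vt k.+1).
have t_incr : nondecreasing_seq t.
  by apply/nondecreasing_seqP => k; apply/iterate_residual_le/(iterate_unit_pos k).1.
have t_bnd : has_ubound (range t).
  exists (mx_l1 (A ^+ s)) => _ [k _ <-]; have [mX sX] := (monicXn R s, size_polyXn R s).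
  rewrite /t vtE; apply: le_trans (Ps_min (Pv k) mX sX) _.
  by rewrite pAvXn (le_trans (ler_enorm_mulmx _ _)) // (iterate_unit_pos k).1 mulr1.
have t_cvg := nondecreasing_cvgn t_incr t_bnd.
exists (sup (range t)); last by rewrite -cvg_shiftS.
apply: lt_le_trans (iterate_unit_pos 0).2 _.
by rewrite -(cvg_lim _ t_cvg) //; apply: nondecreasing_cvgn_le t_incr _ 0%N; exact: cvgP t_cvg.
Qed.

Lemma iterate_limit_point (tau : R) (psi : nat -> nat) x (px : {poly R}) :
  0 < tau -> (fun k => enorm (vt k)) @ \oo --> tau ->
  (forall j, (j <= psi j)%N) -> enorm_cvg (v \o psi) x -> is_Ps A s x px ->
  [/\ enorm x = 1, enorm (pAv A px x) = tau, (s < grade A x)%N &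
       enorm_cvg (fun j => v (psi j).+1) (tau^-1 *: pAv A px x)].
Proof.
move=> tau_gt0 t_cvg psi_ge vx Px.
have u_unit j : enorm ((v \o psi) j) = 1 by exact: (iterate_unit_pos _).1.
have res_cvg : (fun j => enorm (pAv A (P (psi j)) ((v \o psi) j))) @ \oo --> tau.
  rewrite (eq_cvg _ _ (g := fun j => enorm (vt (psi j).+1))) => [|j]; last by rewrite vtE.
  by apply: cvgn_comp_ge t_cvg => j; apply: leqW.
have Pu j : is_Ps A s ((v \o psi) j) (P (psi j)) by exact: Pv.
have x_norm := residual_limit_norm tau_gt0 Pu u_unit vx res_cvg Px.
split; first exact: unit_limit u_unit vx.
- exact: x_norm.
- exact: grade_limit_gt tau_gt0 Pu vx res_cvg.
have px_neq0 : pAv A px x != 0 by rewrite -enorm_eq0 x_norm gt_eqF.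
rewrite -x_norm (_ : (fun j => _) = fun j =>
    (enorm (pAv A (P (psi j)) (v (psi j))))^-1 *: pAv A (P (psi j)) (v (psi j))).
  exact: enorm_cvg_normalize px_neq0 (residual_limit tau_gt0 Pu u_unit vx res_cvg Px).
by apply/funext => j; rewrite vE vtE.
Qed.

End Iteration.

Lemma Ps_two_step_eigen (R : realType) n (A : 'M[R]_n.+1) s x (p q : {poly R}) (tau : R) :
  A^T = A -> enorm x = 1 -> is_Ps A s x p -> enorm (pAv A p x) = tau -> 0 < tau ->
  q \is monic -> size q = s.+1 -> enorm (pAv A q (tau^-1 *: pAv A p x)) = tau ->
  pAv A (q * p) x = tau ^+ 2 *: x.
Proof.
move=> symA x_unit Px px_norm tau_gt0 mq sq qw_norm; set w := tau^-1 *: _ in qw_norm.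
have pxE : pAv A p x = tau *: w by rewrite /w scalerKV ?gt_eqF.
have yE : pAv A (q * p) x = tau *: pAv A q w by rewrite pAvMl pxE pAvZr.
have yx : dotv (pAv A (q * p) x) x = tau ^+ 2.
  rewrite yE dotvZl dotv_pAv // -dotvZl -pxE dotvC (Ps_dot_monic Px mq sq) px_norm.
  by rewrite expr2.
have yy : dotv (pAv A (q * p) x) (pAv A (q * p) x) = tau ^+ 4.
  by rewrite yE dotvZl dotvZr -enorm_sqr qw_norm; ring.
apply/eqP; rewrite -subr_eq0 -dotvv_eq0 dotvBl !dotvBr !dotvZl !dotvZr (dotvC x).
by rewrite yx yy -enorm_sqr x_unit; apply/eqP; ring.
Qed.

Lemma grade_le_eigen_mul (R : realType) n (A : 'M[R]_n.+1) s x (p q : {poly R}) c :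
  (0 < s)%N -> p \is monic -> size p = s.+1 -> q \is monic -> size q = s.+1 ->
  pAv A (q * p) x = c *: x -> (grade A x <= 2 * s)%N.
Proof.
move=> s_gt0 mp sp mq sq qpx.
have sqp : size (q * p) = (2 * s).+1.
  by rewrite size_Mmonic ?monic_neq0 // sp sq addSn /= addnS addnn mul2n.
have sc : (size (- c%:P)%R < size (q * p)%R)%N.
  by rewrite sqp size_polyN (leq_ltn_trans (size_polyC_leq1 c)) // ltnS muln_gt0.
apply: (grade_le (q := q * p - c%:P)).
- by rewrite monicE lead_coefDl // lead_coefM (monicP mp) (monicP mq) mulr1.
- by rewrite size_polyDl.
- by rewrite pAvBl pAvC qpx subrr.
Qed.

Theorem theorem4p2 (R : realType) (n' : nat) (A : 'M[R]_n'.+1) (s : nat)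
  (v0 : 'cV[R]_n'.+1)
  (vt v : nat -> 'cV[R]_n'.+1) (P : nat -> {poly R}) :
  A^T = A ->
  (1 <= s)%N -> (s < dmin A)%N ->
  enorm v0 = 1 -> (s.+1 <= grade A v0)%N ->
  v 0%N = v0 ->
  (forall k, is_Ps A s (v k) (P k)) ->
  (forall k, vt k.+1 = pAv A (P k) (v k)) ->
  (forall k, v k.+1 = (enorm (vt k.+1))^-1 *: vt k.+1) ->
  exists tau : R,
    [/\ 0 < tau,
        (fun k => enorm (vt k)) @ \oo --> tau &
        forall vs : 'cV[R]_n'.+1,
          (exists phi : nat -> nat, {homo phi : a b / (a < b)%N} /\
             (fun k => enorm (v (2 * phi k)%N - vs)) @ \oo --> (0 : R)) ->
          forall pv : {poly R}, is_Ps A s vs pv ->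
          let ws := tau^-1 *: pAv A pv vs in
          forall pw : {poly R}, is_Ps A s ws pw ->
            [/\ pAv A (pw * pv) vs - tau ^+ 2 *: vs = 0,
                (s < grade A vs)%N & (grade A vs <= 2 * s)%N]].
Proof.
move=> symA s_gt0 _ v0_unit v0_grade v0E Pv vtE vE; subst v0.
have [tau tau_gt0 t_cvg] := iterate_residual_cvg symA v0_unit v0_grade Pv vtE vE.
exists tau; split=> // vs [phi [phi_incr vs_cvg]] pv Pvs ws pw Pws.
have psi_ge j : (j <= 2 * phi j)%N.
  apply: leq_trans (leq_pmull _ _) => //; elim: j => // j IHj.
  exact: leq_ltn_trans IHj (phi_incr _ _ (ltnSn j)).
have [vs_unit pv_norm vs_grade ws_cvg] :=
  iterate_limit_point symA v0_unit v0_grade Pv vtE vE tau_gt0 t_cvg psi_ge vs_cvg Pvs.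
have psi1_ge j : (j <= (2 * phi j).+1)%N by apply: leqW.
have [_ pw_norm _ _] :=
  iterate_limit_point symA v0_unit v0_grade Pv vtE vE tau_gt0 t_cvg psi1_ge ws_cvg Pws.
have [[mpv spv _] [mpw spw _]] := (Pvs, Pws).
have eig := Ps_two_step_eigen symA vs_unit Pvs pv_norm tau_gt0 mpw spw pw_norm.
split=> //; first by rewrite eig subrr.
exact: grade_le_eigen_mul s_gt0 mpv spv mpw spw eig.
Qed.
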